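(* Let $l\in\mathbb{N}$ and for each $i\in\{1,\dots,l\}$ let $S_i$ be a countable adequate commutative partial semigroup and let $\langle y_{i,n}\rangle_{n=1}^{\infty}$ be an adequate sequence in $S_i$. Let $T=S_1\times\cdots\times S_l$ with coordinatewise partial operation, and let \[ \mathscr{L}=\Big\{p\in\delta T:\ \text{for each } A\in p \text{ and each } m,k\in\mathbb{N} \text{ there exists, for each } i\in\{1,\dots,l\}, \text{ a weak product subsystem } \langle x_{i,n}\rangle_{n=1}^{m} \text{ of } \langle y_{i,n}\rangle_{n=k}^{\infty} \text{ such that } FS(\langle x_{1,n}\rangle_{n=1}^{m})\times\cdots\times FS(\langle x_{l,n}\rangle_{n=1}^{m})\subseteq A\Big\}. \] Then $\mathscr{L}$ is a compact subsemigroup of $\delta T$.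
   Context: A partial semigroup $(S,+)$ is a set with a map $+$ from a subset of $S\times S$ to $S$ such that $(a+b)+c=a+(b+c)$ whenever either side is defined (then both are defined and equal); it is commutative if $a+b$ is defined iff $b+a$ is, and then they are equal. For $s\in S$, $\varphi(s)=\{t: s+t\text{ defined}\}$; for finite nonempty $H\subseteq S$, $\sigma(H)=\bigcap_{s\in H}\varphi(s)$; $S$ is adequate if all $\sigma(H)\ne\emptyset$. On $T=S_1\times\cdots\times S_l$, $\bar a+\bar b$ is defined iff $a_i+b_i$ is defined for every $i$, and then equals $(a_1+b_1,\dots,a_l+b_l)$. For a partial semigroup $S$: $\beta S$ is the space of ultrafilters on $S$ with basic open sets $\overline{A}=\{p: A\in p\}$; $\delta S=\bigcap_{x\in S}\overline{\varphi(x)}$; for $p,q\in\delta S$, $A\in p+q$ iff $\{x\in S: -x+A\in q\}\in p$, where $-x+A=\{y\in\varphi(x): x+y\in A\}$. A sequence $\langle y_n\rangle_{n=1}^\infty$ is adequate if all finite sums $\sum_{n\in F}y_n$ are defined and for every finite nonempty $H\subseteq S$ there is $m$ with all sums $\sum_{n\in F}y_n$, $F\subseteq\{m,m+1,\dots\}$ finite nonempty, lying in $\sigma(H)$. For $k,m\in\mathbb{N}$, $\langle x_n\rangle_{n=1}^{m}$ is a weak product subsystem of $\langle y_n\rangle_{n=k}^{\infty}$ if there are finite nonempty sets $H_1,\dots,H_m\subseteq\{k,k+1,\dots\}$, pairwise disjoint, with $x_n=\sum_{t\in H_n}y_t$ for each $n$. $FS(\langle x_n\rangle_{n=1}^{m})=\{\sum_{n\in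 F}x_n: \emptyset\ne F\subseteq\{1,\dots,m\}\}$. *)

From HB Require Import structures.
From mathcomp Require Import all_boot all_classical all_reals all_analysis.
Set Implicit Arguments. Unset Strict Implicit. Unset Printing Implicit Defensive.
Local Open Scope classical_set_scope.

(* A partial operation on S is modelled as op : S -> S -> option S,
   with op a b = None meaning "a + b is undefined". *)

Definition psg_assoc {S : Type} (op : S -> S -> option S) :=
  forall a b c : S,
    let lhs := obind (fun ab => op ab c) (op a b) in
    let rhs := obind (fun bc => op a bc) (op b c) in
    (lhs <> None \/ rhs <> None) -> lhs = rhs.

Definition psg_comm {S : Type} (op : S -> S -> option S) :=
  forall a b : S, (op a b <> None <-> op b a <> None) /\
                  (op a b <> None -> op a b = op b a).

Definition comm_psg {S : Type} (op : S -> S -> option S) :=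
  psg_assoc op /\ psg_comm op.

Definition phi {S : Type} (op : S -> S -> option S) (s : S) : set S :=
  [set t | op s t <> None].

Definition sigma {S : Type} (op : S -> S -> option S) (H : set S) : set S :=
  [set t | forall s, H s -> op s t <> None].

Definition adequate {S : Type} (op : S -> S -> option S) :=
  forall H : set S, finite_set H -> H !=set0 -> sigma op H !=set0.

Definition psum {S : Type} (op : S -> S -> option S) (s : seq S) : option S :=
  match s with
  | [::] => None
  | x :: r => foldl (fun acc y => obind (fun a => op a y) acc) (Some x) r
  end.

(* A finite nonempty subset F of {k, k+1, ...} of nat, represented by its
   strictly increasing enumeration. *)
Definition fin_ne_from (k : nat) (F : seq nat) : Prop :=
  [/\ sorted ltn F, F != [::] & all (leq k) F].

Definition Fsum {S : Type} (op : S -> S -> option S) (y : nat -> S)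
  (F : seq nat) : option S := psum op (map y F).

(* adequate sequence <y_n>_{n=1}^oo (the value y 0 is irrelevant) *)
Definition adequate_seq {S : Type} (op : S -> S -> option S) (y : nat -> S) :=
  (forall F, fin_ne_from 1 F -> Fsum op y F <> None) /\
  (forall H : set S, finite_set H -> H !=set0 ->
     exists m, 0 < m /\
       forall F, fin_ne_from m F ->
         exists s, Fsum op y F = Some s /\ sigma op H s).

Definition weak_product_subsystem {S : Type} (op : S -> S -> option S)
  (y : nat -> S) (k m : nat) (x : nat -> S) : Prop :=
  exists H : nat -> seq nat,
    [/\ (forall n, 1 <= n <= m -> fin_ne_from k (H n)),
        (forall n n', 1 <= n <= m -> 1 <= n' <= m -> n != n' ->
           forall t, t \in H n -> t \notin H n')
      & (forall n, 1 <= n <= m -> Fsum op y (H n) = Some (x n))].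

Definition FS {S : Type} (op : S -> S -> option S) (x : nat -> S) (m : nat)
  : set S :=
  [set s | exists F, [/\ fin_ne_from 1 F, all (fun n => n <= m) F
                       & Fsum op x F = Some s]].

Definition prodT (l : nat) (S : 'I_l -> Type) := forall i : 'I_l, S i.

Definition prod_op (l : nat) (S : 'I_l -> Type)
  (op : forall i, S i -> S i -> option (S i)) (a b : prodT S)
  : option (prodT S) :=
  if [forall i : 'I_l, isSome (op i (a i) (b i))]
  then Some (fun i => odflt (a i) (op i (a i) (b i)))
  else None.

Definition beta (X : Type) := {F : set_system X | UltraFilter F}.
HB.instance Definition _ X := gen_eqMixin (beta X).
HB.instance Definition _ X := gen_choiceMixin (beta X).

Definition bbase {X : Type} (A : set X) : set (beta X) :=
  [set p | proj1_sig p A].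

Lemma bbase_cover X : \bigcup_(i in [set: set X]) bbase i = [set: beta X].
Proof.
apply/seteqP; split => // p _; exists setT => //.
case: p => F UF /=; rewrite /bbase /=; exact: filterT.
Qed.

Lemma bbase_join X : forall (i j : set X) t, [set: set X] i -> [set: set X] j ->
  bbase i t -> bbase j t ->
  exists k, [/\ [set: set X] k, bbase k t & bbase k `<=` bbase i `&` bbase j].
Proof.
move=> i j [F UF] _ _ /= Fi Fj; exists (i `&` j); split => //.
  by rewrite /bbase /=; apply: filterI.
by move=> [G UG]; rewrite /bbase /= => Gij; split; apply: filterS Gij => x [].
Qed.

HB.instance Definition _ X :=
  isBaseTopological.Build (beta X) (@bbase_cover X) (@bbase_join X).

Definition deltaS {S : Type} (op : S -> S -> option S) : set (beta S) :=
  [set p | forall x : S, proj1_sig p (phi op x)].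

(* p + q :  A in p + q  iff  { x : -x + A in q } in p,
   where -x + A = { y in phi(x) : x + y in A } *)
Definition uf_add {S : Type} (op : S -> S -> option S)
  (p q : set_system S) : set_system S :=
  [set A | p [set x | q [set y | exists z, op x y = Some z /\ A z]]].

Definition scrL (l : nat) (S : 'I_l -> Type)
  (op : forall i, S i -> S i -> option (S i)) (y : forall i, nat -> S i)
  : set (beta (prodT S)) :=
  [set p | deltaS (prod_op op) p /\
     forall A : set (prodT S), proj1_sig p A ->
     forall m k : nat, 0 < m -> 0 < k ->
       exists x : forall i : 'I_l, nat -> S i,
         (forall i, weak_product_subsystem (op i) (y i) k m (x i)) /\
         [set t : prodT S | forall i, FS (op i) (x i) m (t i)] `<=` A].

Definition subsemigroup_delta {S : Type} (op : S -> S -> option S)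
  (K : set (beta S)) : Prop :=
  [/\ K !=set0, K `<=` deltaS op &
      forall p q, K p -> K q ->
        exists2 r, K r & proj1_sig r = uf_add op (proj1_sig p) (proj1_sig q)].

From HB Require Import structures.
From mathcomp Require Import all_boot all_classical all_reals all_analysis.
From mathcomp Require Import zify.
Local Open Scope classical_set_scope.

(* The condition defining L only constrains the members of p, so L is closed in
   beta T, hence compact.  It is nonempty: by Ellis--Numakura the closed
   subsemigroup K_i = \bigcap_k cl FS(<y_(i,n)>_(n>=k)) of delta S_i contains an
   idempotent e_i, every member of which contains FS(x) for weak product
   subsystems x of any length starting anywhere (Galvin--Glazer), and the tensor
   product e_1 (x) ... (x) e_l lies in L.  It is closed under +: for A in p + q
   take x for p with prod_i FS(x_i) inside {a | -a + A in q}; this product is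
   finite, so the sets -a + A meet in a member of q, which yields z for q with
   blocks beyond those of x; then x_(i,n) + z_(i,n) is a weak product subsystem
   and, by commutativity, the product of its FS-sets lies in A. *)

Set Implicit Arguments.
Unset Strict Implicit.

Section UltraFilterLimit.
Variable T : Type.

Lemma ultraP (F : set_system T) :
  ProperFilter F -> (forall A, F A \/ F (~` A)) -> UltraFilter F.
Proof.
move=> PF FAC; split => // G PG FG; apply/seteqP; split => // A GA.
case: (FAC A) => // /FG GnA; exfalso.
have : G (A `&` ~` A) by exact: filterI.
by rewrite setICr; exact: filter_not_empty.
Qed.

Lemma ultra_limit (I : Type) (p : set_system I) (G : I -> set_system T) :
  UltraFilter p -> (forall i, UltraFilter (G i)) ->
  UltraFilter [set A | p [set i | G i A]].
Proof.
move=> Up UG.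
have FF : Filter [set A | p [set i | G i A]].
  split => [|A B|A B AB]; rewrite /mkset.
  - by apply: filterS filterT => i _; exact: filterT.
  - by move=> pA pB; apply: filterS (filterI pA pB) => i []; exact: filterI.
  - by apply: filterS => i; exact: filterS.
apply: ultraP; first by apply: Build_ProperFilter_ex => A /= /filter_ex [i /filter_ex].
move=> A /=; case: (in_ultra_setVsetC [set i | G i A] Up); first by left.
move=> pnA; right; apply: filterS pnA => i /= nGA.
by case: (in_ultra_setVsetC A (UG i)).
Qed.

End UltraFilterLimit.

Lemma beta_ultra (X : Type) (p : beta X) : UltraFilter (sval p).
Proof. exact: proj2_sig. Qed.

(* A hint rather than an instance: [sval p] occurs both at type [set_system X]
   and at its unfolding [set X -> Prop], which instance matching tells apart. *)
Global Hint Extern 0 (UltraFilter (proj1_sig _)) => exact: beta_ultra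
  : typeclass_instances.

Section BetaTopology.
Variable X : Type.
Implicit Types (p q : beta X) (C : set (beta X)).

Lemma beta_eq p q : sval p `<=` sval q -> p = q.
Proof.
case: p q => [F UF] [G UG] /= FG.
have GF : G = F by exact: max_filter FG.
by subst G; congr exist; exact: Prop_irrelevance.
Qed.

Definition beta_closed C :=
  forall p, (forall B, sval p B -> exists2 q, C q & sval q B) -> C p.

Lemma beta_cluster (F : set_system (beta X)) : ProperFilter F ->
  exists p, forall W B, F W -> sval p B -> exists2 q, W q & sval q B.
Proof.
move=> PF; have [G [UG FG]] := ultraFilterLemma PF.
exists (exist _ _ (ultra_limit UG (@beta_ultra X))) => W B FW /= GB.
by have [q [Wq qB]] := filter_ex (filterI (FG W FW) GB); exists q.
Qed.

Lemma beta_closed_compact C : beta_closed C -> compact C.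
Proof.
move=> cC F PF FC; have [p hp] := beta_cluster PF.
exists p; split; first by apply: cC => B pB; exact: hp FC pB.
move=> A U FA; rewrite nbhsE => -[V [oV Vp] VU].
have [D _ DV] := oV; rewrite -DV in Vp VU; case: Vp => B DB pB.
have [q Aq qB] := hp _ _ FA pB.
by exists q; split => //; apply: VU; exists B.
Qed.

Lemma beta_closed_bbase B : beta_closed (bbase B).
Proof.
move=> p hp; case: (in_ultra_setVsetC B (beta_ultra p)) => // /hp [q].
rewrite /bbase /= => qB qnB.
by have [x []] := filter_ex (filterI qB qnB).
Qed.

Lemma beta_closed_forall (I : Type) (C : I -> set (beta X)) :
  (forall i, beta_closed (C i)) -> beta_closed [set p | forall i, C i p].
Proof. by move=> cC p hp i; apply: cC => B /hp [q Cq qB]; exists q. Qed.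

Lemma beta_closedI C C' : beta_closed C -> beta_closed C' -> beta_closed (C `&` C').
Proof.
by move=> cC cC' p hp; split; [apply: cC | apply: cC'] => B /hp [q [] *]; exists q.
Qed.

Lemma beta_closed_all (P : set (set X)) :
  beta_closed [set p | forall A, sval p A -> P A].
Proof. by move=> p hp A /hp [q /(_ A)]. Qed.

Lemma beta_closed_set1 p : beta_closed [set p].
Proof. by move=> q hq; apply: beta_eq => B /hq [_ ->]. Qed.

End BetaTopology.

Section BetaContinuous.
Variables X Y : Type.
Implicit Types (f : beta X -> beta Y) (C : set (beta X)).

Definition beta_continuous f :=
  forall B : set Y, exists A : set X, forall p, sval (f p) B <-> sval p A.

Lemma beta_closed_preimage f (C : set (beta Y)) :
  beta_continuous f -> beta_closed C -> beta_closed (f @^-1` C).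
Proof.
move=> fc cC p hp; apply: cC => B; have [A fA] := fc B.
by move=> /fA /hp [q Cq /fA qB]; exists (f q).
Qed.

Lemma beta_closed_image f C :
  beta_continuous f -> beta_closed C -> beta_closed (f @` C).
Proof.
move=> fc cC r hr.
pose F := [set W | exists2 B, sval r B & C `&` f @^-1` bbase B `<=` W].
have PF : ProperFilter F.
  apply: Build_ProperFilter_ex.
    by move=> W [B /hr [_ [q Cq <-] qB] BW]; exists q; exact: BW.
  split.
  - by exists setT; [exact: filterT |].
  - move=> W W' [B rB BW] [B' rB' BW']; exists (B `&` B'); first exact: filterI.
    move=> q [Cq fqBB']; have fqB : sval (f q) B by apply: filterS fqBB' => ? [].
    have fqB' : sval (f q) B' by apply: filterS fqBB' => ? [].
    by split; [apply: BW | apply: BW'].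
  - by move=> W W' WW' [B rB BW]; exists B => //; exact: subset_trans WW'.
have [p hp] := beta_cluster PF.
have FC : F C by exists setT => [|q []//]; exact: filterT.
exists p; first by apply: cC => A /(hp _ _ FC).
apply/esym/beta_eq => B rB.
case: (in_ultra_setVsetC B (beta_ultra (f p))) => // fpnB; exfalso.
have [A fA] := fc (~` B).
have FB : F (C `&` f @^-1` bbase B) by exists B.
have [q [_ fqB] /fA fqnB] := hp _ A FB (proj1 (fA p) fpnB).
by have [x []] := filter_ex (filterI fqB fqnB).
Qed.

End BetaContinuous.

Section PartialSemigroup.
Variables (X : Type) (op : X -> X -> option X).

Definition lift_op (a b : option X) : option X :=
  if a is Some x then obind (op x) b else None.

Definition left_preim (x : X) (A : set X) : set X :=
  [set y | exists z, op x y = Some z /\ A z].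

Lemma psg_assocE : psg_assoc op ->
  forall a b c, obind (op^~ c) (op a b) = obind (op a) (op b c).
Proof.
move=> opA a b c; have := opA a b c => /=.
by case: (obind _ _) (obind _ _) => [u|] [v|] opAabc //;
  apply: opAabc; by [left | right].
Qed.

Lemma psg_commE : psg_comm op -> forall a b, op a b = op b a.
Proof.
move=> opC a b; have [defC eqC] := opC a b.
case Eab: (op a b) => [u|]; first by rewrite -Eab eqC // Eab.
case Eba: (op b a) => [v|] //; exfalso.
by have := proj2 defC; rewrite Eab Eba; apply.
Qed.

Hypothesis opA : psg_assoc op.

Lemma lift_opA a b c : lift_op (lift_op a b) c = lift_op a (lift_op b c).
Proof.
case: a b c => [x|] [y|] [z|] //=; first exact: psg_assocE.
by case: (op x y).
Qed.

Lemma op_reassocr x y z u v : op x y = Some u -> op u z = Some v ->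
  exists2 w, op y z = Some w & op x w = Some v.
Proof.
move=> Exy Euz; have := psg_assocE opA x y z; rewrite Exy /= Euz.
by case: (op y z) => [w|] //= Exw; exists w.
Qed.

Lemma op_reassocl x y z w v : op y z = Some w -> op x w = Some v ->
  exists2 u, op x y = Some u & op u z = Some v.
Proof.
move=> Eyz Exw; have := psg_assocE opA x y z; rewrite Eyz /= Exw.
by case: (op x y) => [u|] //= Euz; exists u.
Qed.

Lemma psum_rcons (s : seq X) a : s <> [::] ->
  psum op (rcons s a) = lift_op (psum op s) (Some a).
Proof. by case: s => [|x s] //= _; rewrite foldl_rcons; case: foldl. Qed.

Lemma psum_cat (s t : seq X) : s <> [::] -> t <> [::] ->
  psum op (s ++ t) = lift_op (psum op s) (psum op t).
Proof.
move=> s0; elim/last_ind: t => [|t a IH] // _.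
rewrite -rcons_cat psum_rcons; last by case: (s) s0.
case: t IH => [|b t] IH; first by rewrite cats0.
by rewrite IH // psum_rcons // lift_opA.
Qed.

Lemma psum_cons a (s : seq X) : s <> [::] ->
  psum op (a :: s) = lift_op (Some a) (psum op s).
Proof. by move=> s0; rewrite -cat1s psum_cat. Qed.

Lemma Fsum_cat (x : nat -> X) (F G : seq nat) : F != [::] -> G != [::] ->
  Fsum op x (F ++ G) = lift_op (Fsum op x F) (Fsum op x G).
Proof.
by move=> F0 G0; rewrite /Fsum map_cat psum_cat //; [case: F F0 | case: G G0].
Qed.

End PartialSemigroup.

Section CommutativePartialSemigroup.
Variables (X : Type) (op : X -> X -> option X).
Hypotheses (opA : psg_assoc op) (opC : psg_comm op).

Lemma lift_opC a b : lift_op op a b = lift_op op b a.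
Proof. by case: a b => [x|] [y|] //=; exact: psg_commE. Qed.

Lemma lift_opACA a b c d :
  lift_op op (lift_op op a b) (lift_op op c d) =
  lift_op op (lift_op op a c) (lift_op op b d).
Proof.
rewrite !lift_opA // -[lift_op op b (lift_op op c d)]lift_opA //.
by rewrite (lift_opC b c) lift_opA.
Qed.

Lemma psum_mapD (I : eqType) (x z w : I -> X) (s : seq I) : s <> [::] ->
  (forall n, n \in s -> op (x n) (z n) = Some (w n)) ->
  psum op (map w s) = lift_op op (psum op (map x s)) (psum op (map z s)).
Proof.
elim/last_ind: s => [|s a IH] // _ xzw.
have xzwa : op (x a) (z a) = Some (w a) by apply: xzw; rewrite mem_rcons mem_head.
case: s IH xzw => [|b s] IH xzw; first by rewrite /= xzwa.
rewrite !map_rcons !psum_rcons // IH // => [|n ns]; last first.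
  by apply: xzw; rewrite mem_rcons in_cons ns orbT.
by rewrite lift_opACA /= xzwa.
Qed.

Lemma FS_split (x z w : nat -> X) m t :
  (forall n, 0 < n <= m -> op (x n) (z n) = Some (w n)) -> FS op w m t ->
  exists a b, [/\ FS op x m a, FS op z m b & op a b = Some t].
Proof.
move=> Exzw [F [hF Fm EF]]; have [_ F0 F1] := hF.
have : Fsum op w F = lift_op op (Fsum op x F) (Fsum op z F).
  apply: psum_mapD => [|n nF]; first by case: (F) F0.
  by apply: Exzw; rewrite (allP F1 n nF) (allP Fm n nF).
rewrite EF; case Ex: (Fsum op x F) => [a|] //; case Ez: (Fsum op z F) => [b|] //= Eab.
by exists a, b; split => //; exists F.
Qed.

End CommutativePartialSemigroup.

Section UltrafilterSum.
Variables (X : Type) (op : X -> X -> option X).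
Implicit Types p q r : beta X.

Lemma left_preim_ultra q x : sval q (phi op x) ->
  UltraFilter [set A | sval q (left_preim op x A)].
Proof.
move=> qx; apply: ultraP.
  apply: Build_ProperFilter_ex => [A /= /filter_ex [y [z [_ Az]]]|]; first by exists z.
  split => [|A B|A B AB]; rewrite /mkset.
  - apply: filterS qx => y; rewrite /phi /left_preim /=.
    by case: (op x y) => [z|] // _; exists z.
  - move=> qA qB; apply: filterS (filterI qA qB) => y [[z [Ez Az]] [z' [Ez' Bz']]].
    by exists z; split => //; split => //; move: Ez'; rewrite Ez => -[->].
  - by apply: filterS => y [z [Ez Az]]; exists z; split => //; apply: AB.
move=> A /=; case: (in_ultra_setVsetC (left_preim op x A) (beta_ultra q)).
  by left.
move=> qnA; right; apply: filterS (filterI qx qnA) => y [].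
rewrite /phi /left_preim /=; case: (op x y) => [z|] // _ nA.
by exists z; split => // Az; apply: nA; exists z.
Qed.

Lemma uf_add_ultra p q : deltaS op q -> UltraFilter (uf_add op (sval p) (sval q)).
Proof. by move=> dq; apply: ultra_limit => x; exact: left_preim_ultra. Qed.

Definition radd q (dq : deltaS op q) p : beta X := exist _ _ (uf_add_ultra p dq).

Lemma radd_continuous q (dq : deltaS op q) : beta_continuous (radd dq).
Proof. by move=> B; exists [set x | sval q (left_preim op x B)]. Qed.

Hypothesis opA : psg_assoc op.

Lemma radd_delta p q (dq : deltaS op q) : deltaS op p -> deltaS op (radd dq p).
Proof.
move=> dp x; apply: filterS (dp x) => a; rewrite /phi /=.
case Exa: (op x a) => [c|] // _; apply: filterS (dq c) => b /= Ecb.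
have := psg_assocE opA x a b; rewrite Exa /=.
case: (op a b) => [d|] /= Ed; last by move: Ecb; rewrite /phi /= Ed.
by exists d; split => //; rewrite /phi /= -Ed.
Qed.

Lemma uf_addA p q r : deltaS op q ->
  uf_add op (uf_add op (sval p) (sval q)) (sval r) =
  uf_add op (sval p) (uf_add op (sval q) (sval r)).
Proof.
move=> dq; apply/funext => A; apply/propext; rewrite /uf_add /mkset; split.
- apply: filterS => x /=; apply: filterS => y [u [Exy]].
  apply: filterS => z [v [Euz Av]].
  by have [w Eyz Exw] := op_reassocr opA Exy Euz; exists w; split => //; exists v.
- apply: filterS => x /= qA; apply: filterS (filterI qA (dq x)) => y [/= rA].
  rewrite /phi /=; case Exy: (op x y) => [u|] // _; exists u; split => //.
  apply: filterS rA => z [w [Eyz [v [Exw Av]]]].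
  have [u' Exy' Euz] := op_reassocl opA Eyz Exw.
  by move: Exy' Euz; rewrite Exy => -[<-] Euz; exists v.
Qed.

End UltrafilterSum.

Section EllisNumakura.
Variables (X : Type) (op : X -> X -> option X).
Hypothesis opA : psg_assoc op.
Implicit Types (p q : beta X) (C M N : set (beta X)).

Definition closed_subsemigroup C := subsemigroup_delta op C /\ beta_closed C.

Lemma subsemigroup_radd C p q : subsemigroup_delta op C -> C p -> C q ->
  forall dq : deltaS op q, C (radd dq p).
Proof.
move=> [_ _ Cadd] Cp Cq dq; have [r Cr rpq] := Cadd p q Cp Cq.
by have -> : radd dq p = r by apply/esym/beta_eq => A; rewrite rpq.
Qed.

Lemma closed_subsemigroup_bigcap (D : set (set (beta X))) :
  D !=set0 -> D `<=` closed_subsemigroup ->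
  (forall N N', D N -> D N' -> N `<=` N' \/ N' `<=` N) ->
  closed_subsemigroup (\bigcap_(N in D) N).
Proof.
move=> [N0 DN0] Dcs Dtot; have [[_ N0delta _] _] := Dcs N0 DN0.
split; last first.
  by rewrite /bigcap; apply: beta_closed_forall => N;
    apply: beta_closed_forall => /Dcs [].
split.
- pose F := [set W | exists2 N, D N & N `<=` W].
  have PF : ProperFilter F.
    apply: Build_ProperFilter_ex.
      by move=> W [N /Dcs [[[p Np] _ _] _] NW]; exists p; exact: NW.
    split => [|W W'|W W' WW'].
    + by exists N0.
    + move=> [N DN NW] [N' DN' N'W']; case: (Dtot N N' DN DN') => NN'.
        by exists N => // p Np; split; [exact: NW | exact/N'W'/NN'].
      by exists N' => // p Np; split; [exact/NW/NN' | exact: N'W'].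
    + by move=> [N DN NW]; exists N => //; exact: subset_trans WW'.
  have [p hp] := beta_cluster PF.
  exists p => N DN; have [_ cN] := Dcs N DN.
  by apply: cN => B; apply: hp; exists N.
- by move=> p /(_ N0 DN0) /N0delta.
- move=> p q Dp Dq; exists (radd (N0delta q (Dq N0 DN0)) p) => // N DN.
  by have [sN _] := Dcs N DN; exact: subsemigroup_radd sN (Dp N DN) (Dq N DN) _.
Qed.

Lemma minimal_closed_subsemigroup C : closed_subsemigroup C ->
  exists M, [/\ M `<=` C, closed_subsemigroup M &
    forall N, closed_subsemigroup N -> N `<=` M -> M `<=` N].
Proof.
move=> cC; pose T := {N | closed_subsemigroup N /\ N `<=` C}.
pose R (N N' : T) := `[< sval N' `<=` sval N >].
have [[M [cM MC]] Mmin] : exists M : T, premaximal R M.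
  apply: (@ZL_preorder _ (exist _ C (conj cC (@subset_refl _ C)))).
  - by move=> N; apply/asboolP.
  - move=> N1 N2 N3 /asboolP N21 /asboolP N32; apply/asboolP.
    exact: subset_trans N21.
  - move=> A Atot; have [[N0 AN0]|A0] := pselect (A !=set0); last first.
      exists (exist _ C (conj cC (@subset_refl _ C))) => N AN.
      by exfalso; apply: A0; exists N.
    pose D := [set sval N | N in A].
    have cD : closed_subsemigroup (\bigcap_(N in D) N).
      apply: closed_subsemigroup_bigcap.
      - by exists (sval N0), N0.
      - by move=> _ [N _ <-]; case: (svalP N).
      - move=> _ _ [N AN <-] [N' AN' <-].
        by case: (Atot N N' AN AN') => /asboolP; [right | left].
    have DC : \bigcap_(N in D) N `<=` C.
      move=> p /(_ (sval N0) (ex_intro2 _ _ N0 AN0 erefl)).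
      by case: (svalP N0) => _; apply.
    exists (exist _ (\bigcap_(N in D) N) (conj cD DC)) => N AN; apply/asboolP => p /=.
    by apply; exists N.
exists M; split => // N cN NM.
have := Mmin (exist _ N (conj cN (subset_trans NM MC))); rewrite /R /=.
by move=> /(_ (asboolT NM)) /asboolP.
Qed.

Lemma closed_subsemigroup_radd_image M q (dq : deltaS op q) :
  closed_subsemigroup M -> M q -> closed_subsemigroup (radd dq @` M).
Proof.
move=> [sM Mclosed] Mq.
split; last exact: beta_closed_image (radd_continuous dq) Mclosed.
case: (sM) => _ Mdelta _; split.
- by exists (radd dq q), q.
- by move=> _ [p Mp <-]; exact: (radd_delta opA dq (Mdelta p Mp)).
- move=> _ _ [p Mp <-] [p' Mp' <-]; have dp' := Mdelta p' Mp'.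
  exists (radd dq (radd dp' (radd dq p))); last exact: uf_addA opA _ _ _ dp'.
  exists (radd dp' (radd dq p)) => //.
  exact: subsemigroup_radd sM (subsemigroup_radd sM Mp Mq _) Mp' _.
Qed.

Lemma closed_subsemigroup_radd_fiber M e (de : deltaS op e) :
  closed_subsemigroup M -> M `&` radd de @^-1` [set e] !=set0 ->
  closed_subsemigroup (M `&` radd de @^-1` [set e]).
Proof.
move=> [sM Mclosed] Bne; split; last first.
  apply: beta_closedI Mclosed _.
  by apply: beta_closed_preimage (radd_continuous de) _; exact: beta_closed_set1.
case: (sM) => _ Mdelta _; split => //.
- by move=> q [Mq _]; exact: Mdelta.
- move=> q q' [Mq qe] [Mq' q'e]; have dq' := Mdelta q' Mq'.
  exists (radd dq' q) => //; split; first exact: subsemigroup_radd sM Mq Mq' _.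
  have qe' : uf_add op (sval q) (sval e) = sval e := congr1 sval qe.
  have q'e' : uf_add op (sval q') (sval e) = sval e := congr1 sval q'e.
  by apply: beta_eq => A; rewrite /= uf_addA // q'e' qe'.
Qed.

(* Ellis--Numakura: a minimal closed subsemigroup M equals its right translate
   M + e, and then equals the fiber of that translation over e. *)
Theorem closed_subsemigroup_idempotent C : closed_subsemigroup C ->
  exists2 e, C e & uf_add op (sval e) (sval e) = sval e.
Proof.
move=> /minimal_closed_subsemigroup [M [MC cM Mmin]].
case: (cM) => -[[e Me] Mdelta _] _; have de := Mdelta e Me.
have MeM : radd de @` M `<=` M.
  by move=> _ [p Mp <-]; exact: subsemigroup_radd cM.1 Mp Me _.
have [p Mp pe] := Mmin _ (closed_subsemigroup_radd_image de cM Me) MeM e Me.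
have cB := closed_subsemigroup_radd_fiber cM (ex_intro _ p (conj Mp pe)).
have [_ ee] := Mmin _ cB (@subIsetl _ M _) e Me.
by exists e; [exact: MC | exact: (congr1 sval ee)].
Qed.

End EllisNumakura.

Lemma fin_ne_from_mono k k' F : k <= k' -> fin_ne_from k' F -> fin_ne_from k F.
Proof.
by move=> kk' [sF F0 k'F]; split => //; apply: sub_all k'F => t; exact: leq_trans.
Qed.

Lemma fin_ne_from_cons k a F :
  fin_ne_from k (a :: F) -> k <= a /\ (F = [::] \/ fin_ne_from a.+1 F).
Proof.
move=> [/= aF _ /andP [ka _]]; split => //.
case: F aF => [|b F] aF; [by left | right]; split => //.
- exact: path_sorted aF.
- exact: order_path_min ltn_trans aF.
Qed.

Lemma fin_ne_from_cons_gt k a F :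
  fin_ne_from k (a :: F) -> k < a -> fin_ne_from k.+1 (a :: F).
Proof.
move=> [sF _ /andP [_ kF]] ka; split => //=; rewrite ka /=.
by apply: sub_all (order_path_min ltn_trans sF) => t; exact: ltn_trans.
Qed.

Definition seq_bound (F : seq nat) := \max_(t <- F) t.+1.

Lemma seq_bound_gt F t : t \in F -> t < seq_bound F.
Proof. by move=> tF; exact: (leq_bigmax_seq (P := predT) (F := succn) _ tF). Qed.

Lemma fin_ne_from_cat k M F G : fin_ne_from k F -> fin_ne_from M G ->
  k <= M -> seq_bound F <= M -> fin_ne_from k (F ++ G).
Proof.
move=> [sF F0 kF] [sG _ MG] kM FM; split.
- rewrite sorted_pairwise; last exact: ltn_trans.
  rewrite pairwise_cat -!sorted_pairwise ?sF ?sG ?andbT //; try exact: ltn_trans.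
  apply/allrelP => a b aF bG.
  exact: leq_trans (seq_bound_gt aF) (leq_trans FM (allP MG b bG)).
- by case: F F0 {sF kF FM}.
- rewrite all_cat kF /=; apply: sub_all MG => t; exact: leq_trans.
Qed.

Lemma FS_range (X : Type) (op : X -> X -> option X) (x : nat -> X) m :
  FS op x m `<=`
  range (fun b : m.-tuple bool => odflt (x 0) (Fsum op x (mask b (iota 1 m)))).
Proof.
move=> s [F [[sF _ F1] Fm EF]].
have : subseq F (iota 1 m).
  have -> : F = [seq t <- iota 1 m | t \in F].
    apply: (irr_sorted_eq ltn_trans ltnn) => //.
    - by apply: sorted_filter; [exact: ltn_trans | exact: iota_ltn_sorted].
    - move=> t; rewrite mem_filter mem_iota; case tF: (t \in F) => //=.
      by rewrite (allP F1 t tF) add1n ltnS (allP Fm t tF).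
  exact: filter_subseq.
case/subseqP => b; rewrite size_iota => /eqP bm EFb.
by exists (Tuple bm) => //=; rewrite -EFb EF.
Qed.

Lemma FS_nth (X : Type) (op : X -> X -> option X) (x : nat -> X) m n :
  0 < n <= m -> FS op x m (x n).
Proof.
by case/andP => n0 nm; exists [:: n]; split; [split; rewrite //= n0 | rewrite /= nm |].
Qed.

Lemma filter_forall_in (T U : Type) (I : finType) (g : I -> U) (D : set U)
    (P : U -> set T) (F : set_system T) {FF : Filter F} :
  D `<=` range g -> (forall u, D u -> F (P u)) ->
  F [set t | forall u, D u -> P u t].
Proof.
move=> Dg FP.
have FgP i : F [set t | D (g i) -> P (g i) t].
  have [Dgi|nDgi] := pselect (D (g i)); first by apply: filterS (FP _ Dgi) => t Pt _.
  by apply: filterS filterT => t _ /nDgi.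
apply: filterS (filter_forall FF FgP) => t gP u Du.
by have [i _ giu] := Dg u Du; rewrite -giu in Du *; exact: gP.
Qed.

Section BlockSystems.
Variables (X : Type) (op : X -> X -> option X) (y : nat -> X).

Definition sums_in (x : nat -> X) j n (B : set X) :=
  forall F s, fin_ne_from j.+1 F -> all (leq^~ (j + n)) F ->
    Fsum op x F = Some s -> B s.

Definition block_system (x : nat -> X) (H : nat -> seq nat) k j n :=
  (forall t, j < t <= j + n -> fin_ne_from k (H t) /\ Fsum op y (H t) = Some (x t)) /\
  (forall t t' u u', j < t < t' -> t' <= j + n -> u \in H t -> u' \in H t' -> u < u').

Definition cons_at (T : Type) j (a : T) (f : nat -> T) t := if t == j then a else f t.

Lemma sums_in0 x j B : sums_in x j 0 B.
Proof. by move=> [|a F] s [_ //= _ /andP [ja _]] /andP [aj _]; lia. Qed.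

Lemma block_system0 x H k j : block_system x H k j 0.
Proof. by split => [t|t t' u u' /andP [jt tt'] t'j]; lia. Qed.

Lemma sums_in_FS x m B : sums_in x 0 m B -> FS op x m `<=` B.
Proof. by move=> xB s [F [hF Fm EF]]; exact: xB hF Fm EF. Qed.

Lemma block_system_wps x H k m :
  block_system x H k 0 m -> weak_product_subsystem op y k m x.
Proof.
move=> [hH incH]; exists H; split => [n /hH [] //|n n' nm n'm nn' t tn|n /hH [] //].
apply/negP => tn'; case: (ltngtP n n') nn' => // [lt|gt] _.
- by have := incH n n' t t ltac:(lia) ltac:(lia) tn tn'; rewrite ltnn.
- by have := incH n' n t t ltac:(lia) ltac:(lia) tn' tn; rewrite ltnn.
Qed.

Lemma block_system_cons x H x0 G k K j n :
  fin_ne_from k G -> Fsum op y G = Some x0 -> k <= K -> seq_bound G <= K ->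
  block_system x H K j.+1 n ->
  block_system (cons_at j.+1 x0 x) (cons_at j.+1 G H) k j n.+1.
Proof.
rewrite /cons_at => hG EG kK GK [hH incH]; split.
  move=> t /andP [jt tjn]; case: eqP => [_|/eqP tj] //.
  have [hHt ->] : fin_ne_from K (H t) /\ Fsum op y (H t) = Some (x t) by apply: hH; lia.
  by split => //; exact: fin_ne_from_mono kK hHt.
move=> t t' u u' /andP [jt tt'] t'jn; have -> : (t' == j.+1) = false by lia.
case: eqP => [_ uG u'H|/eqP tj uH u'H]; last by apply: incH uH u'H; lia.
have [[_ _ KH] _] := hH t' ltac:(lia).
exact: leq_trans (seq_bound_gt uG) (leq_trans GK (allP KH u' u'H)).
Qed.

Hypothesis opA : psg_assoc op.

Lemma sums_in_cons x x0 j n B :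
  B x0 -> sums_in x j.+1 n (B `&` left_preim op x0 B) ->
  sums_in (cons_at j.+1 x0 x) j n.+1 B.
Proof.
move=> Bx0 xB F s hF; rewrite addnS -addSn => Fn.
have xB' G t : fin_ne_from j.+2 G -> all (leq^~ (j.+1 + n)) G ->
    Fsum op (cons_at j.+1 x0 x) G = Some t -> (B `&` left_preim op x0 B) t.
  move=> [sG G0 jG] Gn; rewrite /Fsum (eq_in_map _ x G).1 => [|u /(allP jG) ju].
    exact: xB.
  by rewrite /cons_at (gtn_eqF ju).
case: F hF Fn => [|a F] hF Fn; first by case: hF.
have [ja hF'] := fin_ne_from_cons hF.
have [aj|aj] := eqVneq a j.+1; last first.
  case/(xB' (a :: F)) => //; apply: fin_ne_from_cons_gt hF _.
  by rewrite ltn_neqAle eq_sym aj ja.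
have x'j : cons_at j.+1 x0 x a = x0 by rewrite /cons_at aj eqxx.
subst a; case: hF' => [->|hF']; first by rewrite /Fsum /= x'j => -[<-].
rewrite /Fsum map_cons (psum_cons opA) ?x'j; last by case: hF' => _; case: (F).
case/andP: Fn => _ Fn; case EF: (psum _ _) => [s'|] //= Es.
have [_ [w [Ew Bw]]] := xB' F s' hF' Fn EF.
by move: Es; rewrite Ew => -[<-].
Qed.

Lemma weak_product_subsystem_mono x k k' m : k <= k' ->
  weak_product_subsystem op y k' m x -> weak_product_subsystem op y k m x.
Proof.
by move=> kk' [H [hH dH EH]]; exists H; split => // n /hH; exact: fin_ne_from_mono.
Qed.

Lemma weak_product_subsystem_add x k m : weak_product_subsystem op y k m x ->
  exists M, forall z w, weak_product_subsystem op y M m z ->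
    (forall n, 0 < n <= m -> op (x n) (z n) = Some (w n)) ->
    weak_product_subsystem op y k m w.
Proof.
move=> [H [hH dH EH]]; exists (maxn k (\max_(n < m.+1) seq_bound (H n))).
set M := maxn _ _ => z w [G [hG dG EG]] Exzw.
have HM n : 0 < n <= m -> seq_bound (H n) <= M.
  move=> /andP [_ nm]; apply: leq_trans (leq_maxr _ _).
  pose i := Ordinal (nm : n < m.+1).
  exact: (leq_bigmax (F := fun n : 'I_m.+1 => seq_bound (H n)) i).
have ltM n u : 0 < n <= m -> u \in H n -> u < M.
  by move=> nm uH; exact: leq_trans (seq_bound_gt uH) (HM n nm).
have geM n u : 0 < n <= m -> u \in G n -> M <= u.
  by move=> nm uG; case: (hG n nm) => _ _ /allP; apply.
exists (fun n => H n ++ G n); split.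
- by move=> n nm; exact: fin_ne_from_cat (hH n nm) (hG n nm) (leq_maxl _ _) (HM n nm).
- move=> n n' nm n'm nn' u; rewrite !mem_cat negb_or => /orP [uH|uG].
    rewrite (dH n n' nm n'm nn' u uH) /=; apply/negP => /(geM n' u n'm).
    by rewrite leqNgt (ltM n u nm uH).
  rewrite (dG n n' nm n'm nn' u uG) andbT; apply/negP => /(ltM n' u n'm).
  by rewrite ltnNge (geM n u nm uG).
- move=> n nm; rewrite Fsum_cat // ?(EH n nm) ?(EG n nm); first exact: Exzw.
    by case: (hH n nm).
  by case: (hG n nm).
Qed.

End BlockSystems.

Section AdequateSequence.
Variables (X : Type) (op : X -> X -> option X) (y : nat -> X).
Hypotheses (opA : psg_assoc op) (hy : adequate_seq op y).

Definition FS_tail k := [set s | exists F, fin_ne_from k F /\ Fsum op y F = Some s].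

Definition FS_tail_limits := [set p : beta X | forall k, 0 < k -> sval p (FS_tail k)].

Lemma FS_tail_mono k k' : k <= k' -> FS_tail k' `<=` FS_tail k.
Proof.
by move=> kk' s [F [hF EF]]; exists F; split => //; exact: fin_ne_from_mono hF.
Qed.

Lemma FS_tail_phi x : exists2 k, 0 < k & FS_tail k `<=` phi op x.
Proof.
have [k [k0 hk]] := hy.2 [set x] (finite_set1 x) (ex_intro _ x erefl).
exists k => // s [F [hF EF]]; have [s' [EF' hs']] := hk F hF.
by move: EF'; rewrite EF => -[->]; exact: hs'.
Qed.

Lemma FS_tail_add k s : 0 < k -> FS_tail k s ->
  exists2 M, 0 < M & FS_tail M `<=` left_preim op s (FS_tail k).
Proof.
move=> k0 [F [hF EF]]; exists (maxn k (seq_bound F)); first by rewrite leq_max k0.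
move=> z [G [hG EG]].
have hFG : fin_ne_from k (F ++ G).
  by apply: fin_ne_from_cat hF hG _ _; rewrite ?leq_maxl ?leq_maxr.
have F0 : F != [::] by case: hF.
have G0 : G != [::] by case: hG.
have := hy.1 _ (fin_ne_from_mono k0 hFG); rewrite Fsum_cat // EF EG /=.
case Esz: (op s z) => [w|] // _; exists w; split => //; exists (F ++ G).
by rewrite Fsum_cat // EF EG.
Qed.

Lemma FS_tail_limits_delta : FS_tail_limits `<=` deltaS op.
Proof.
by move=> p Kp x; have [k k0 hk] := FS_tail_phi x; exact: filterS hk (Kp k k0).
Qed.

Lemma FS_tail_limits_closed_subsemigroup : closed_subsemigroup op FS_tail_limits.
Proof.
split; last by do 2 apply: beta_closed_forall => ?; exact: beta_closed_bbase.
split.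
- pose F := [set B | exists2 k, 0 < k & FS_tail k `<=` B].
  have PF : ProperFilter F.
    apply: Build_ProperFilter_ex => [B [k _ kB]|].
      by exists (y k); apply: kB; exists [:: k]; do 2 split => //=; rewrite leqnn.
    split => [|B B' [k k0 kB] [k' k'0 k'B']|B B' BB' [k k0 kB]].
    + by exists 1.
    + exists (maxn k k'); first by rewrite leq_max k0.
      move=> s sk; split; [apply: kB | apply: k'B'];
        by apply: FS_tail_mono sk; rewrite ?leq_maxl ?leq_maxr.
    + by exists k => //; exact: subset_trans BB'.
  have [G [UG FG]] := ultraFilterLemma PF.
  by exists (exist _ G UG) => k k0; apply: FG; exists k.
- exact: FS_tail_limits_delta.
- move=> p q Kp Kq; exists (radd (FS_tail_limits_delta Kq) p) => // k k0.
  apply: filterS (Kp k k0) => s /(FS_tail_add k0) [M M0 hM].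
  exact: filterS hM (Kq M M0).
Qed.

End AdequateSequence.

Section IdempotentFS.
Variables (X : Type) (op : X -> X -> option X) (y : nat -> X) (e : beta X).
Hypotheses (opA : psg_assoc op) (e_tails : FS_tail_limits op y e).
Hypothesis e_idem : uf_add op (sval e) (sval e) = sval e.

Definition starry (B : set X) := forall b, B b -> sval e (left_preim op b B).

Lemma starry_sub A : sval e A -> exists B, [/\ B `<=` A, sval e B & starry B].
Proof.
move=> eA; have eeA : uf_add op (sval e) (sval e) A by rewrite e_idem.
exists (A `&` [set a | sval e (left_preim op a A)]); split => //.
  exact: filterI.
move=> b [Ab eb].
have eeb : uf_add op (sval e) (sval e) (left_preim op b A) by rewrite e_idem.
apply: filterS (filterI eb eeb) => c [[w [Ebc Aw]] ebc].
exists w; split => //; split => //; apply: filterS ebc => d [u [Ecd [v [Ebu Av]]]].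
have [w' Ebc' Ewd] := op_reassocl opA Ecd Ebu.
by move: Ebc' Ewd; rewrite Ebc => -[<-] Ewd; exists v.
Qed.

Lemma starry_shift B b : starry B -> B b -> starry (B `&` left_preim op b B).
Proof.
move=> sB Bb c [Bc [w [Ebc Bw]]].
apply: filterS (filterI (sB c Bc) (sB w Bw)) => d [[u [Ecd Bu]] [v [Ewd Bv]]].
exists u; split => //; split => //.
have [u' Ecd' Ebu] := op_reassocr opA Ebc Ewd.
by move: Ecd' Ebu; rewrite Ecd => -[<-] Ebu; exists v.
Qed.

(* Galvin--Glazer: pick x_(j+1) in B and in a tail FS-set, then recurse inside
   the starry set B `&` (-x_(j+1) + B), beyond the block of x_(j+1). *)
Lemma FS_block_system n : forall j B k, sval e B -> starry B -> 0 < k ->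
  exists x H, block_system op y x H k j n /\ sums_in op x j n B.
Proof.
elim: n => [|n IH] j B k eB sB k0.
  by exists y, (fun _ => [::]); split; [exact: block_system0 | exact: sums_in0].
have [x0 [Bx0 [G [hG EG]]]] := filter_ex (filterI eB (e_tails k0)).
have [x [H [bH sH]]] := IH j.+1 _ (maxn k (seq_bound G)) (filterI eB (sB x0 Bx0))
  (starry_shift sB Bx0) (leq_trans k0 (leq_maxl _ _)).
exists (cons_at j.+1 x0 x), (cons_at j.+1 G H); split; last exact: sums_in_cons.
by apply: block_system_cons hG EG _ _ bH; rewrite ?leq_maxl ?leq_maxr.
Qed.

Theorem idempotent_FS_subsystem m k A : 0 < k -> sval e A ->
  exists2 x, weak_product_subsystem op y k m x & FS op x m `<=` A.
Proof.
move=> k0 eA; have [B [BA eB sB]] := starry_sub eA.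
have [x [H [bH sH]]] := FS_block_system m 0 eB sB k0.
exists x; first exact: block_system_wps bH.
by move=> s /(sums_in_FS sH) /BA.
Qed.

End IdempotentFS.

Section DependentUpdate.
Variables (I : eqType) (T : I -> Type).
Implicit Type f : forall i, T i.

Lemma dfwithC f i j (a : T i) (b : T j) : i != j ->
  dfwith (dfwith f i a) j b = dfwith (dfwith f j b) i a.
Proof.
move=> ij; apply: functional_extensionality_dep => k.
case: (dfwithP (dfwith f i a) b k) => [|k' jk']; first by rewrite dfwithout // dfwithin.
case: (dfwithP f a k') jk' => [|k'' ik''] jk''; first by rewrite dfwithin.
by rewrite !dfwithout.
Qed.

Lemma dfwith_dfwith f i (a b : T i) : dfwith (dfwith f i a) i b = dfwith f i b.
Proof.
apply: functional_extensionality_dep => k.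
by case: (dfwithP (dfwith f i a) b k) => [|k' ik']; rewrite ?dfwithin // !dfwithout.
Qed.

Lemma dfwith_id f i : dfwith f i (f i) = f.
Proof. by apply: functional_extensionality_dep => k; case: (dfwithP f (f i) k). Qed.

End DependentUpdate.

Lemma dep_choice (I : Type) (T : I -> Type) (P : forall i, T i -> Prop) :
  (forall i, exists x, P i x) -> exists f : forall i, T i, forall i, P i (f i).
Proof. by move=> hP; exists (fun i => sval (cid (hP i))) => i; case: cid. Qed.

Section TensorProduct.
Variables (I : eqType) (S : I -> Type) (e : forall i, beta (S i)).
Local Notation T := (forall i, S i).

(* The tensor product of the e_i for i in s, the other coordinates being frozen
   at their values in f. *)
Fixpoint tensor (s : seq I) (f : T) : set_system T :=
  if s is i :: s' then [set A | sval (e i) [set a | tensor s' (dfwith f i a) A]]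
  else principal_filter f.

Lemma tensor_ultra s f : UltraFilter (tensor s f).
Proof.
elim: s f => [|i s IH] f; first exact: principal_filter_ultra.
exact: ultra_limit.
Qed.

#[local] Existing Instance tensor_ultra.

Lemma tensor_dfwith s f j (a : S j) (A : set T) : j \notin s ->
  tensor s f [set g | A (dfwith g j a)] <-> tensor s (dfwith f j a) A.
Proof.
elim: s f => [|i s IH] f /=.
  by move=> _; split => /principal_filterP ?; apply/principal_filterP.
rewrite in_cons negb_or => /andP [ji js]; split; apply: filterS => b /=.
  by move/(IH _ js); rewrite dfwithC // eq_sym.
by move=> h; apply/(IH _ js); rewrite dfwithC // eq_sym.
Qed.

Lemma tensor_box s f (B : forall i, set (S i)) : (forall i, sval (e i) (B i)) ->
  (forall i, i \notin s -> B i (f i)) -> tensor s f [set g | forall i, B i (g i)].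
Proof.
elim: s f => [|i s IH] f eB fB /=; first by apply/principal_filterP => i; exact: fB.
apply: filterS (eB i) => b Bb /=; apply: IH => // j js.
case: (dfwithP f b j) js => [//|j' ij' j's]; apply: fB.
by rewrite in_cons negb_or eq_sym ij'.
Qed.

Variable op : forall i, S i -> S i -> option (S i).
Variable W : forall i, (nat -> S i) -> Prop.
Arguments op : clear implicits.
Arguments W : clear implicits.
Variable m : nat.
Hypothesis eFS : forall i A, sval (e i) A -> exists2 x, W i x & FS (op i) x m `<=` A.

Lemma tensor_FS s : uniq s -> forall f A, tensor s f A ->
  exists x : forall i, nat -> S i, (forall i, i \in s -> W i (x i)) /\
    forall g, (forall i, i \notin s -> g i = f i) ->
      (forall i, i \in s -> FS (op i) (x i) m (g i)) -> A g.
Proof.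
elim: s => [_ f A /principal_filterP Af|i s IH /= /andP [iNs us] f A /eFS [xi Wxi xiA]].
  exists (fun i _ => f i); split => // g gf _.
  by have -> : g = f by apply: functional_extensionality_dep => i; exact: gf.
pose A' := [set g | forall a, FS (op i) xi m a -> A (dfwith g i a)].
have tA' : tensor s f A'.
  apply: (filter_forall_in (@FS_range _ (op i) xi m)) => a /xiA ta.
  exact: (tensor_dfwith _ _ _ iNs).2.
have [x [Wx xA']] := IH us f A' tA'.
exists (dfwith x i xi); split => [j|g gf gFS].
  case: (dfwithP x xi j) => [//|j' ij']; rewrite in_cons eq_sym (negbTE ij').
  exact: Wx.
have giFS : FS (op i) xi m (g i) by have := gFS i (mem_head _ _); rewrite dfwithin.
suff /(_ (g i) giFS) : A' (dfwith g i (f i)) by rewrite dfwith_dfwith dfwith_id.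
apply: xA' => j js.
  case: (dfwithP g (f i) j) js => [//|j' ij' j's]; apply: gf.
  by rewrite in_cons negb_or eq_sym ij'.
have ij : i != j by apply: contraNneq iNs => ->.
have := gFS j; rewrite in_cons js orbT !dfwithout //; exact.
Qed.

End TensorProduct.

Lemma option_ext (T : Type) (o o' : option T) :
  (forall v, o = Some v <-> o' = Some v) -> o = o'.
Proof.
case: o o' => [u|] [v|] h //; first exact/h.
  by have := (h u).1 erefl.
by have := (h v).2 erefl.
Qed.

Section ProductPartialSemigroup.
Variables (l : nat) (S : 'I_l -> Type) (op : forall i, S i -> S i -> option (S i)).
Arguments op : clear implicits.
Implicit Types (a b c : prodT S) (x z w : forall i, nat -> S i).

Lemma prod_opP a b c :
  prod_op op a b = Some c <-> forall i, op i (a i) (b i) = Some (c i).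
Proof.
rewrite /prod_op; split.
  by case: ifP => // /forallP abP [<-] i; move: (abP i); case: (op i _ _).
move=> abc; have -> : [forall i, isSome (op i (a i) (b i))].
  by apply/forallP => i; rewrite abc.
by congr Some; apply: functional_extensionality_dep => i; rewrite abc.
Qed.

Lemma prod_op_defined a b : (forall i, op i (a i) (b i) <> None) ->
  exists c, prod_op op a b = Some c.
Proof.
move=> ab; exists (fun i => odflt (a i) (op i (a i) (b i))); apply/prod_opP => i.
by case: (op i _ _) (ab i).
Qed.

Lemma obind_prod_opP a b (f : prodT S -> option (prodT S))
    (g : forall i, S i -> option (S i)) :
  (forall u v, f u = Some v <-> forall i, g i (u i) = Some (v i)) ->
  forall v, obind f (prod_op op a b) = Some v <->
    forall i, obind (g i) (op i (a i) (b i)) = Some (v i).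
Proof.
move=> fP v; split.
  case Eab: (prod_op op a b) => [u|] //= /fP fuv i.
  by have /prod_opP -> := Eab; exact: fuv.
move=> abv; have [u Eu] : exists u, prod_op op a b = Some u.
  by apply: prod_op_defined => i; move: (abv i); case: (op i _ _).
by rewrite Eu /=; apply/fP => i; move: (abv i); have /prod_opP -> := Eu.
Qed.

Lemma prod_op_assoc : (forall i, psg_assoc (op i)) -> psg_assoc (prod_op op).
Proof.
move=> opA a b c /= _; apply: option_ext => v.
have lhsP := obind_prod_opP a b (g := fun i => op i ^~ (c i)) (prod_opP ^~ c) v.
have rhsP := obind_prod_opP b c (g := fun i => op i (a i)) (prod_opP a) v.
rewrite {}lhsP {}rhsP.
by split => abc i; rewrite ?(psg_assocE (opA i)) // -(psg_assocE (opA i)).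
Qed.

Definition FS_box x m := [set t : prodT S | forall i, FS (op i) (x i) m (t i)].

Lemma FS_box_range x m : FS_box x m `<=` range (fun bb : {ffun 'I_l -> m.-tuple bool} =>
  fun i => odflt (x i 0) (Fsum (op i) (x i) (mask (bb i) (iota 1 m)))).
Proof.
move=> t xt; have /choice [bb Ebb] : forall i, exists b : m.-tuple bool,
    odflt (x i 0) (Fsum (op i) (x i) (mask b (iota 1 m))) = t i.
  by move=> i; have [b _ Eb] := FS_range (xt i); exists b.
exists [ffun i => bb i] => //.
by apply: functional_extensionality_dep => i; rewrite ffunE.
Qed.

Lemma FS_box_add_defined x z m A :
  (forall a b, FS_box x m a -> FS_box z m b -> left_preim (prod_op op) a A b) ->
  exists w, forall i n, 0 < n <= m -> op i (x i n) (z i n) = Some (w i n).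
Proof.
move=> xzA; exists (fun i n => odflt (x i n) (op i (x i n) (z i n))) => i n nm.
have [c [/prod_opP Exz _]] :=
  xzA (x^~ n) (z^~ n) (fun j => FS_nth _ _ nm) (fun j => FS_nth _ _ nm).
by rewrite Exz.
Qed.

Hypotheses (opA : forall i, psg_assoc (op i)) (opC : forall i, psg_comm (op i)).
Arguments opA : clear implicits.
Arguments opC : clear implicits.

Lemma FS_box_sum x z w m A :
  (forall i n, 0 < n <= m -> op i (x i n) (z i n) = Some (w i n)) ->
  (forall a b, FS_box x m a -> FS_box z m b -> left_preim (prod_op op) a A b) ->
  FS_box w m `<=` A.
Proof.
move=> Exzw xzA t wt.
have [a /dep_choice [b abt]] :=
  dep_choice (fun i => FS_split (opA i) (opC i) (Exzw i) (wt i)).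
have Eab : prod_op op a b = Some t by apply/prod_opP => i; case: (abt i).
have [c [Eab' Ac]] := xzA a b (fun i => let: And3 h _ _ := abt i in h)
  (fun i => let: And3 _ h _ := abt i in h).
by move: Eab'; rewrite Eab => -[->].
Qed.

End ProductPartialSemigroup.

Section ScrL.
Variables (l : nat) (S : 'I_l -> Type) (op : forall i, S i -> S i -> option (S i)).
Arguments op : clear implicits.
Variable y : forall i, nat -> S i.
Hypotheses (opA : forall i, psg_assoc (op i)) (opC : forall i, psg_comm (op i)).
Hypothesis hy : forall i, adequate_seq (op i) (y i).
Arguments opA : clear implicits.
Arguments opC : clear implicits.

Lemma scrL_closed : beta_closed (scrL op y).
Proof.
apply: beta_closedI; last exact: beta_closed_all.
by apply: beta_closed_forall => x; exact: beta_closed_bbase.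
Qed.

Lemma scrL_nonempty : scrL op y !=set0.
Proof.
have /dep_choice [e eP] : forall i, exists e : beta (S i),
    FS_tail_limits (op i) (y i) e /\ uf_add (op i) (sval e) (sval e) = sval e.
  move=> i; have [e eK ee] := closed_subsemigroup_idempotent (opA i)
    (FS_tail_limits_closed_subsemigroup (opA i) (hy i)).
  by exists e.
have eK i : FS_tail_limits (op i) (y i) (e i) by case: (eP i).
have ee i : uf_add (op i) (sval (e i)) (sval (e i)) = sval (e i) by case: (eP i).
pose U := tensor e (enum 'I_l) (fun i => y i 0).
have UU : UltraFilter U := tensor_ultra _ _ _.
exists (exist _ U UU); split.
  move=> x; apply: filterS (tensor_box (B := fun i => phi (op i) (x i)) _ _).
  - by move=> g gx; rewrite /phi /=; have [c ->] := prod_op_defined gx.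
  - by move=> i; exact: (FS_tail_limits_delta (hy i) (eK i) (x i)).
  - by move=> i; rewrite mem_enum.
move=> A eA m k _ k0.
have eFS i B : sval (e i) B ->
    exists2 x, weak_product_subsystem (op i) (y i) k m x & FS (op i) x m `<=` B.
  by move=> eB; exact: (idempotent_FS_subsystem (opA i) (eK i) (ee i) m k0 eB).
have [x [wx xA]] := tensor_FS eFS (enum_uniq _) eA.
exists x; split => [i|g gx]; first by apply: wx; rewrite mem_enum.
by apply: xA => i; rewrite mem_enum.
Qed.

Lemma scrL_add p q : scrL op y p -> scrL op y q ->
  exists2 r, scrL op y r & sval r = uf_add (prod_op op) (sval p) (sval q).
Proof.
move=> [dp Lp] [dq Lq]; exists (radd dq p) => //.
split; first exact: (radd_delta (prod_op_assoc opA) dq dp).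
move=> A pqA m k m0 k0; have [x [wx xA]] := Lp _ pqA m k m0 k0.
pose Y := [set b | forall a, FS_box op x m a -> left_preim (prod_op op) a A b].
have qY : sval q Y by apply: (filter_forall_in (@FS_box_range _ _ op x m)) => a /xA.
have [M xM] := choice (fun i => weak_product_subsystem_add (opA i) (wx i)).
have [z [wz zY]] := Lq Y qY m (maxn k (\max_i M i)) m0 (leq_trans k0 (leq_maxl _ _)).
have xzA a b : FS_box op x m a -> FS_box op z m b -> left_preim (prod_op op) a A b.
  by move=> xa /zY; apply.
have [w Exzw] := FS_box_add_defined xzA.
exists w; split; last exact: (FS_box_sum opA opC Exzw xzA).
move=> i; apply: xM (Exzw i); apply: weak_product_subsystem_mono (wz i).
exact: leq_trans (leq_bigmax i) (leq_maxr _ _).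
Qed.

End ScrL.

Theorem lemma10 (l : nat) (S : 'I_l -> Type)
  (op : forall i, S i -> S i -> option (S i)) (y : forall i, nat -> S i) :
  0 < l ->
  (forall i, countable [set: S i]) ->
  (forall i, comm_psg (op i)) ->
  (forall i, adequate (op i)) ->
  (forall i, adequate_seq (op i) (y i)) ->
  compact (scrL op y) /\ subsemigroup_delta (prod_op op) (scrL op y).
Proof.
move=> _ _ hc _ hy.
have opA i : psg_assoc (op i) := (hc i).1.
have opC i : psg_comm (op i) := (hc i).2.
split; first by apply: beta_closed_compact; exact: scrL_closed.
split; [exact: scrL_nonempty | by move=> p [] | exact: scrL_add].
Qed.
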